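(* For every natural number $n>2$, the star $K_{1,n}$ is not $\mathcal{D}_t$-unique. In particular, the $\mathcal{D}_t$-equivalence class $[K_{1,n}]$ contains $K_{1,n}$, the lollipop graph $L(n,1)$, and every graph $L(n,1)-e$ where $e$ is an edge of the complete graph $K_n$ inside $L(n,1)$ that shares no endpoint with the pendant edge of $L(n,1)$.
   Context: $K_{1,n}$ is the star with one center and $n$ leaves. The lollipop graph $L(n,1)$ is the complete graph $K_n$ with one extra vertex joined by a single (pendant) edge to one vertex of $K_n$. For a finite simple graph $G=(V,E)$, a set $D\subseteq V$ is a total dominating set if every vertex of $V$ is adjacent to some vertex of $D$; $d_t(G,i)$ is the number of total dominating sets of size $i$, and $D_t(G,x)=\sum_{i} d_t(G,i)x^i$ is the total domination polynomial. Two graphs $G,H$ are $\mathcal{D}_t$-equivalent if $D_t(G,x)=D_t(H,x)$ (graphs being compared among graphs of the same order); $[G]$ is the class of graphs $\mathcal{D}_t$-equivalent to $G$, and $G$ is $\mathcal{D}_t$-unique if every graph $\mathcal{D}_t$-equivalent to $G$ is isomorphic to $G$. *)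

From mathcomp Require Import all_boot all_order all_algebra.
Set Implicit Arguments. Unset Strict Implicit. Unset Printing Implicit Defensive.
Import GRing.Theory.
Local Open Scope ring_scope.

Definition simple_graph (T : finType) (e : rel T) : Prop :=
  symmetric e /\ irreflexive e.

Definition total_dominating (T : finType) (e : rel T) (D : {set T}) : bool :=
  [forall x, [exists y in D, e x y]].

Definition Dt (T : finType) (e : rel T) : {poly int} :=
  \sum_(D : {set T} | total_dominating e D) 'X^#|D|.

Definition graph_iso (T T' : finType) (e : rel T) (e' : rel T') : Prop :=
  exists f : T -> T', bijective f /\ forall x y, e' (f x) (f y) = e x y.

Definition Dt_unique (T : finType) (e : rel T) : Prop :=
  forall (T' : finType) (e' : rel T'), simple_graph e' -> #|T'| = #|T| ->
    Dt e' = Dt e -> graph_iso e e'.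

(* Star K_{1,n} on vertices 0..n, center n. *)
Definition star (n : nat) : rel 'I_n.+1 :=
  fun x y => (x != y) && ((nat_of_ord x == n) || (nat_of_ord y == n)).

(* Lollipop L(n,1): K_n on 0..n-1, pendant vertex n joined to vertex 0. *)
Definition lollipop (n : nat) : rel 'I_n.+1 :=
  fun x y => (x != y) &&
    [|| (x < n)%N && (y < n)%N,
        (nat_of_ord x == 0%N) && (nat_of_ord y == n)
      | (nat_of_ord x == n) && (nat_of_ord y == 0%N)].

Arguments lollipop : clear implicits.
Definition lollipop_minus (n : nat) (a b : 'I_n.+1) : rel 'I_n.+1 :=
  fun x y => lollipop n x y && ~~ (((x == a) && (y == b)) || ((x == b) && (y == a))).
Arguments lollipop_minus : clear implicits.
Arguments star : clear implicits.

From mathcomp Require Import all_boot all_order all_algebra.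
From mathcomp Require Import perm.
Set Implicit Arguments. Unset Strict Implicit. Unset Printing Implicit Defensive.

(* Call a vertex h of a graph a hub if it is adjacent to every
   other vertex but not to itself, and suppose some vertex p has h as its only
   neighbour.  Then a set D is total dominating exactly when h \in D (p must be
   dominated) and #|D| >= 2 (h itself needs a neighbour in D other than h).
   Hence D_t(G) only depends on the vertex type, not on the hub chosen, since a
   transposition of vertices maps the sets counted for h onto those for h'.
   The star K_{1,n} (hub n, pendant 0), the lollipop L(n,1) (hub 0, pendant n)
   and L(n,1)-e with e avoiding 0 (same hub and pendant) all fit this pattern,
   which gives the three equalities of polynomials.  Non-uniqueness follows
   because L(n,1) contains the triangle 0,1,2 when n > 2, while the star is
   triangle-free, and isomorphisms reflect triangles. *)

Local Open Scope ring_scope.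

Definition hub_poly (T : finType) (h : T) : {poly int} :=
  \sum_(D : {set T} | (h \in D) && (1 < #|D|)%N) 'X^#|D|.

(* The polynomial does not depend on the distinguished vertex: the
   transposition of h and h' is a size-preserving bijection between the
   two families of sets. *)
Lemma hub_poly_indep (T : finType) (h h' : T) : hub_poly h = hub_poly h'.
Proof.
pose swap (D : {set T}) := [set tperm h h' x | x in D].
have swapK : involutive swap.
  move=> D; rewrite /swap -imset_comp -[RHS]imset_id.
  by apply: eq_imset => x /=; apply: tpermK.
have card_swap D : #|swap D| = #|D| by rewrite card_imset //; apply: perm_inj.
rewrite /hub_poly (reindex swap); last by exists swap => D _; apply: swapK.
apply: eq_big => [D|D _]; last by rewrite card_swap.
by rewrite card_swap -{1}(tpermR h h') mem_imset //; apply: perm_inj.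
Qed.

Section HubGraph.

Variables (T : finType) (e : rel T) (h p : T).

Hypothesis hub_irrefl : ~~ e h h.
Hypothesis hub_adj : forall y, y != h -> e h y && e y h.
Hypothesis pendant_adj : forall y, e p y -> y = h.

Lemma total_dominating_hub (D : {set T}) :
  total_dominating e D = (h \in D) && (1 < #|D|)%N.
Proof.
rewrite /total_dominating (cardsD1 h D); case hD: (h \in D) => /=; last first.
  apply/negbTE/forallP=> /(_ p) /existsP [y /andP [yD /pendant_adj yh]].
  by rewrite -yh yD in hD.
rewrite add1n ltnS card_gt0; apply/forallP/set0Pn => [dom | [z]].
  have /existsP [z /andP [zD ehz]] := dom h.
  exists z; rewrite in_setD1 zD andbT.
  by apply: contraNneq _ hub_irrefl => zh; rewrite zh in ehz.
rewrite in_setD1 => /andP [zh zD] x; apply/existsP.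
have [-> | xh] := eqVneq x h.
  by exists z; rewrite zD; case/andP: (hub_adj zh).
by exists h; rewrite hD; case/andP: (hub_adj xh).
Qed.

Lemma Dt_hub : Dt e = hub_poly h.
Proof. by apply: eq_bigl => D; rewrite total_dominating_hub. Qed.

End HubGraph.

Definition triangle (T : finType) (e : rel T) (x y z : T) : bool :=
  [&& e x y, e y z & e x z].

Lemma iso_triangle (T T' : finType) (e : rel T) (e' : rel T') (x y z : T') :
  graph_iso e e' -> triangle e' x y z -> exists u v w, triangle e u v w.
Proof.
case=> f [[g _ gK] adj]; exists (g x), (g y), (g z).
have adj_g u v : e (g u) (g v) = e' u v by rewrite -adj !gK.
by rewrite /triangle !adj_g.
Qed.

(* Every edge of the star contains its centre n, so it has no triangle. *)
Lemma star_triangle_free n (x y z : 'I_n.+1) : ~~ triangle (star n) x y z.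
Proof.
rewrite /triangle /star -!val_eqE /=.
by case: (nat_of_ord x =P n) => [->|_]; case: (nat_of_ord y =P n) => [->|_];
  case: (nat_of_ord z =P n) => [->|_]; rewrite ?eqxx ?andbF.
Qed.

Lemma lollipop_sym n : symmetric (lollipop n).
Proof.
move=> x y; rewrite /lollipop eq_sym; congr (_ && (_ || _)); first exact: andbC.
by rewrite orbC; congr (_ || _); apply: andbC.
Qed.

Lemma lollipop_simple n : simple_graph (lollipop n).
Proof. by split; [apply: lollipop_sym | move=> x; rewrite /lollipop eqxx]. Qed.

Lemma lollipop_triangle n : (2 < n)%N ->
  triangle (lollipop n) (inord 0) (inord 1) (inord 2).
Proof.
move=> n2; have n1 := ltnW n2; have n0 := ltnW n1.
rewrite /triangle /lollipop -!val_eqE /=.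
by rewrite !inordK ?n0 ?n1 ?n2 // ltnS ltnW.
Qed.

Lemma lollipop_hub n (y : 'I_n.+1) : (0 < n)%N -> y != ord0 ->
  lollipop n ord0 y && lollipop n y ord0.
Proof.
move=> n0 y0; rewrite lollipop_sym andbb /lollipop y0 n0 /= andbT.
by move: (ltn_ord y); rewrite ltnS leq_eqVlt => /orP [/eqP ->|->];
  rewrite ?eqxx ?orbT.
Qed.

Lemma lollipop_pendant n (y : 'I_n.+1) : lollipop n ord_max y -> y = ord0.
Proof.
rewrite /lollipop /= ltnn eqxx /= => /andP [_ /orP [/andP [n0 _] | /eqP y0]].
  by apply/val_inj/eqP; rewrite /= -leqn0 -(eqP n0) -ltnS.
exact: val_inj.
Qed.

Lemma Dt_star n : (0 < n)%N -> Dt (star n) = hub_poly (ord_max : 'I_n.+1).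
Proof.
move=> n0; apply: (Dt_hub (p := ord0)) => [|y yn|y].
- by rewrite /star eqxx.
- by rewrite /star eq_sym yn eqxx orbT.
- rewrite /star -val_eqE /= => /andP [_].
  by rewrite eq_sym (negbTE (lt0n_neq0 n0)) => /eqP yn; apply: val_inj.
Qed.

Lemma Dt_lollipop n : (0 < n)%N -> Dt (lollipop n) = hub_poly (ord0 : 'I_n.+1).
Proof.
move=> n0; apply: (Dt_hub (p := ord_max)) => [|y|y].
- by rewrite /lollipop eqxx.
- exact: lollipop_hub.
- exact: lollipop_pendant.
Qed.

(* Removing an edge not incident to 0 keeps 0 a hub and n its pendant. *)
Lemma Dt_lollipop_minus n (a b : 'I_n.+1) : (0 < n)%N ->
  nat_of_ord a != 0%N -> nat_of_ord b != 0%N ->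
  Dt (lollipop_minus n a b) = hub_poly (ord0 : 'I_n.+1).
Proof.
move=> n0 a0 b0; apply: (Dt_hub (p := ord_max)) => [|y y0|y].
- by rewrite /lollipop_minus /lollipop eqxx.
- have not_ab (x : 'I_n.+1) : ((ord0 == a) && (x == b)) || ((ord0 == b) && (x == a)) = false.
    by rewrite -!val_eqE /= !(eq_sym 0%N) (negbTE a0) (negbTE b0).
  rewrite /lollipop_minus not_ab !(andbC _ (ord0 == _)) (orbC ((ord0 == b) && _)).
  by rewrite not_ab !andbT lollipop_hub.
- by case/andP=> /lollipop_pendant.
Qed.

Theorem mainTheorem6 (n : nat) (hn : (2 < n)%N) :
  ~ Dt_unique (star n) /\
  Dt (lollipop n) = Dt (star n) /\
  (forall a b : 'I_n.+1,
     a != b -> (a < n)%N -> (b < n)%N ->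
     nat_of_ord a != 0%N -> nat_of_ord b != 0%N ->
     Dt (lollipop_minus n a b) = Dt (star n)).
Proof.
have n0 : (0 < n)%N by apply: ltn_trans hn.
have Dt_lollipop_star : Dt (lollipop n) = Dt (star n).
  by rewrite Dt_lollipop // Dt_star //; apply: hub_poly_indep.
split; last split=> // a b _ _ _ a0 b0.
  move=> uniq; have iso := uniq _ _ (lollipop_simple n) erefl Dt_lollipop_star.
  have [u [v [w]]] := iso_triangle iso (lollipop_triangle hn).
  by apply/negP; apply: star_triangle_free.
by rewrite Dt_lollipop_minus // Dt_star //; apply: hub_poly_indep.
Qed.
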